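(* For every $r\ge0$, $\gamma(h_r)=(-1)^{\binom r2}h_r^*$ and $\gamma(e_r)=(-1)^{\binom r2}e_r^*$ in $OSym$. Consequently $*\circ\gamma\circ\psi=\psi\circ*\circ\gamma$.
   Context: $\Bbbk$ is a field of characteristic $\neq2$. $OSym$ is the graded superalgebra generated by $h_r$ ($r\ge1$) of degree $2r$, parity $r\bmod 2$, subject to (with $h_0:=1$, $r\ge0,s\ge1$): $h_rh_s=h_sh_r$ if $r\equiv s\pmod2$; $h_rh_s+(-1)^rh_sh_r=(-1)^rh_{r+1}h_{s-1}+h_{s-1}h_{r+1}$ otherwise. Define $e_r$ by $\sum_{s=0}^r(-1)^se_sh_{r-s}=\delta_{r,0}$; the $e_r$ ($r\ge1$) generate $OSym$ subject to the same relations as the $h_r$. $\psi$ is the algebra automorphism of $OSym$ with $\psi(h_r)=(-1)^re_r$; $\gamma$ is the algebra involution with $\gamma(e_r)=(-1)^{\binom r2}e_r$; $*$ is the superalgebra anti-involution (i.e. $(ab)^*=(-1)^{\mathrm{par}(a)\mathrm{par}(b)}b^*a^*$) with $e_r^*=e_r$. *)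

(* OSym is presented by generators and relations:
   syntactic terms of the free unital associative k-algebra on generators
   h_1, h_2, ... modulo the smallest congruence [oeq] containing the
   k-algebra axioms and the defining relations of OSym. *)
From mathcomp Require Import all_boot all_order all_algebra.
Set Implicit Arguments. Unset Strict Implicit. Unset Printing Implicit Defensive.
Import GRing.Theory.
Local Open Scope ring_scope.

Section OSym.
Variable k : fieldType.

(* [G n] is the generator h_(n+1). *)
Inductive term : Type :=
| T0 | T1 | G of nat
| Tadd of term & term
| Tmul of term & term
| Tscale of k & term.

Definition hh (r : nat) : term := if r is n.+1 then G n else T1.

Definition sgn (n : nat) : k := (-1) ^+ n.

Inductive oeq : term -> term -> Prop :=
| oeq_refl x : oeq x x
| oeq_sym x y : oeq x y -> oeq y x
| oeq_trans x y z : oeq x y -> oeq y z -> oeq x z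
| oeq_add x x' y y' : oeq x x' -> oeq y y' -> oeq (Tadd x y) (Tadd x' y')
| oeq_mul x x' y y' : oeq x x' -> oeq y y' -> oeq (Tmul x y) (Tmul x' y')
| oeq_scale a x x' : oeq x x' -> oeq (Tscale a x) (Tscale a x')
| oeq_addA x y z : oeq (Tadd x (Tadd y z)) (Tadd (Tadd x y) z)
| oeq_addC x y : oeq (Tadd x y) (Tadd y x)
| oeq_add0 x : oeq (Tadd T0 x) x
| oeq_addN x : oeq (Tadd x (Tscale (-1) x)) T0
| oeq_mulA x y z : oeq (Tmul x (Tmul y z)) (Tmul (Tmul x y) z)
| oeq_mul1l x : oeq (Tmul T1 x) x
| oeq_mul1r x : oeq (Tmul x T1) x
| oeq_mulDl x y z : oeq (Tmul (Tadd x y) z) (Tadd (Tmul x z) (Tmul y z))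
| oeq_mulDr x y z : oeq (Tmul x (Tadd y z)) (Tadd (Tmul x y) (Tmul x z))
| oeq_scaleDr a x y : oeq (Tscale a (Tadd x y)) (Tadd (Tscale a x) (Tscale a y))
| oeq_scaleDl a b x : oeq (Tscale (a + b) x) (Tadd (Tscale a x) (Tscale b x))
| oeq_scaleA a b x : oeq (Tscale (a * b) x) (Tscale a (Tscale b x))
| oeq_scale1 x : oeq (Tscale 1 x) x
| oeq_scaleAl a x y : oeq (Tscale a (Tmul x y)) (Tmul (Tscale a x) y)
| oeq_scaleAr a x y : oeq (Tscale a (Tmul x y)) (Tmul x (Tscale a y))
| oeq_rel_even r s : (0 < s)%N -> odd r = odd s ->
    oeq (Tmul (hh r) (hh s)) (Tmul (hh s) (hh r))
| oeq_rel_odd r s : (0 < s)%N -> odd r <> odd s ->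
    oeq (Tadd (Tmul (hh r) (hh s)) (Tscale (sgn r) (Tmul (hh s) (hh r))))
        (Tadd (Tscale (sgn r) (Tmul (hh r.+1) (hh s.-1)))
              (Tmul (hh s.-1) (hh r.+1))).

(* parity (Z/2-grading): par x b means x is homogeneous of parity b *)
Inductive par : term -> bool -> Prop :=
| par0 b : par T0 b
| par1 : par T1 false
| parG n : par (G n) (odd n.+1)
| parD x y b : par x b -> par y b -> par (Tadd x y) b
| parZ a x b : par x b -> par (Tscale a x) b
| parM x y b c : par x b -> par y c -> par (Tmul x y) (b (+) c)
| par_oeq x y b : par x b -> oeq x y -> par y b.

Definition tsum (s : seq term) : term := foldr Tadd T0 s.

(* e_0 .. e_r, from  sum_(s=0)^r (-1)^s e_s h_(r-s) = delta_(r,0) *)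
Fixpoint es (r : nat) : seq term :=
  match r with
  | 0 => [:: T1]
  | r'.+1 =>
      let l := es r' in
      rcons l (Tscale (sgn r')
        (tsum [seq Tscale (sgn i) (Tmul (nth T0 l i) (hh (r'.+1 - i)))
              | i <- iota 0 r'.+1]))
  end.

Definition ee (r : nat) : term := nth T0 (es r) r.

Definition respects (f : term -> term) :=
  forall x y, oeq x y -> oeq (f x) (f y).

Definition linear_map (f : term -> term) :=
  respects f /\ (forall x y, oeq (f (Tadd x y)) (Tadd (f x) (f y)))
  /\ (forall a x, oeq (f (Tscale a x)) (Tscale a (f x))).

Definition alg_map (f : term -> term) :=
  linear_map f /\ oeq (f T1) T1
  /\ (forall x y, oeq (f (Tmul x y)) (Tmul (f x) (f y))).

Definition alg_automorphism (f : term -> term) :=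
  alg_map f /\ exists g, alg_map g /\
    (forall x, oeq (g (f x)) x) /\ (forall x, oeq (f (g x)) x).

Definition alg_involution (f : term -> term) :=
  alg_map f /\ (forall x, oeq (f (f x)) x).

Definition super_anti_involution (f : term -> term) :=
  linear_map f
  /\ (forall x b, par x b -> par (f x) b)
  /\ (forall x, oeq (f (f x)) x)
  /\ (forall x y b c, par x b -> par y c ->
        oeq (f (Tmul x y)) (Tscale (sgn (b && c)) (Tmul (f y) (f x)))).

End OSym.

From HB Require Import structures.
From mathcomp Require Import all_boot all_order all_algebra.
From mathcomp Require Import boolp zify.
Set Implicit Arguments. Unset Strict Implicit. Unset Printing Implicit Defensive.
Import GRing.Theory.
Local Open Scope ring_scope.

(* The identity for e_r is immediate from the actions of gamma and * on e_r.
   For h_r, apply gamma and * to the relations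
   sum_s (-1)^s e_s h_(r-s) = delta_(r,0).  Writing a_s = (-1)^(s + C(s,2)) e_s,
   gamma shows that r |-> gamma(h_r) is a right inverse of a for convolution,
   while *, reversing products up to the sign (-1)^(st) of two odd factors and
   using C(s+t,2) = C(s,2) + C(t,2) + st, shows that r |-> (-1)^C(r,2) h_r^* is
   a left inverse; hence the two coincide.  For the commutation,
   * o gamma o psi and psi o * o gamma are both linear, unital and reverse
   products of homogeneous elements with the Koszul sign, so they agree as soon
   as they agree on the generators, which both send h_r to
   (-1)^(r + C(r,2)) e_r. *)

Section Convolution.
Variable R : pzRingType.
Implicit Types f g h : nat -> R.

Definition conv f g n := \sum_(i < n.+1) f i * g (n - i)%N.

Lemma conv_rev f g n : \sum_(i < n.+1) f (n - i)%N * g i = conv f g n.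
Proof.
rewrite /conv (reindex_inj rev_ord_inj); apply: eq_bigr => i _ /=.
by rewrite subSS subKn // -ltnS.
Qed.

Lemma big_ord_geq (F : nat -> R) n j : (j <= n)%N ->
  \sum_(i < n.+1 | (j <= i)%N) F i = \sum_(l < (n - j).+1) F (l + j)%N.
Proof.
move=> le_jn; rewrite -(big_mkord (leq j)) (@big_cat_nat _ _ _ j) /= ?leq0n 1?ltnW //.
rewrite big_nat_cond big1 ?add0r => [|i /andP[/andP[_ lt_ij] le_ji]]; last first.
  by rewrite leqNgt lt_ij in le_ji.
rewrite -{1}(add0n j) big_addn subSn // big_mkord.
by apply: eq_bigl => l; rewrite leq_addl.
Qed.

Lemma convA f g h n : conv (conv f g) h n = conv f (conv g h) n.
Proof.
rewrite /conv.
transitivity (\sum_(i < n.+1) \sum_(j < n.+1 | (j < i.+1)%N)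
                f j * g (i - j)%N * h (n - i)%N).
  apply: eq_bigr => i _; rewrite big_distrl /=.
  by rewrite (big_ord_widen n.+1 (fun j => f j * g (i - j)%N * h (n - i)%N)).
rewrite (exchange_big_dep xpredT) //=; apply: eq_bigr => j _.
rewrite big_distrr /=; under eq_bigl do rewrite ltnS.
rewrite (big_ord_geq (fun i => f j * g (i - j)%N * h (n - i)%N)); last by rewrite -ltnS.
apply: eq_bigr => l _.
by rewrite addnK mulrA -subnDA addnC.
Qed.

Lemma conv_inv_unique a g h :
  (forall n, conv a g n = (n == 0)%:R) -> (forall n, conv h a n = (n == 0)%:R) ->
  g =1 h.
Proof.
move=> ag1 ha1 n.
have -> : g n = conv (conv h a) g n.
  rewrite {1}/conv big_ord_recl ha1 mul1r subn0 big1 ?addr0 // => i _.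
  by rewrite ha1 mul0r.
rewrite convA {1}/conv big_ord_recr /= subnn ag1 mulr1 big1 ?add0r // => i _.
by rewrite ag1 subn_eq0 leqNgt ltn_ord mulr0.
Qed.
End Convolution.

(* [oeq] is not decidable, so OSym is built as the type of [oeq]-classes,
   each represented by the predicate [oeq t]. *)
Definition osym (k : fieldType) := {P : term k -> Prop | exists t, P = oeq t}.
HB.instance Definition _ (k : fieldType) := gen_eqMixin (osym k).
HB.instance Definition _ (k : fieldType) := gen_choiceMixin (osym k).

Section Quotient.
Variable k : fieldType.
Local Notation term := (term k).
Local Notation oeq := (@oeq k).
Local Notation osym := (osym k).

Definition cls (t : term) : osym := exist _ (oeq t) (ex_intro _ t erefl).

Definition rep (u : osym) : term := proj1_sig (cid (proj2_sig u)).

Lemma osym_val_inj (u v : osym) : proj1_sig u = proj1_sig v -> u = v.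
Proof.
by case: u v => P pP [Q pQ] /= ePQ; subst Q; congr exist; apply: Prop_irrelevance.
Qed.

Lemma eq_cls x y : cls x = cls y <-> oeq x y.
Proof.
split=> [/(congr1 (@proj1_sig _ _)) /= exy | xy].
  by apply: oeq_sym; rewrite -exy; apply: oeq_refl.
apply: osym_val_inj; apply: funext => z; apply: propext.
by split; apply: oeq_trans; [apply: oeq_sym|].
Qed.

Lemma repK : cancel rep cls.
Proof. by move=> u; apply: osym_val_inj; rewrite /rep; case: cid => t /= ->. Qed.

Lemma osym_ind (P : osym -> Prop) : (forall x, P (cls x)) -> forall u, P u.
Proof. by move=> Pcls u; rewrite -[u]repK. Qed.

Lemma rep_cls x : oeq (rep (cls x)) x.
Proof. by apply/eq_cls; rewrite repK. Qed.

Fact osym_add_key : unit. Proof. exact: tt. Qed.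
Definition osym_add := locked_with osym_add_key
  (fun u v => cls (Tadd (rep u) (rep v))).
Fact osym_mul_key : unit. Proof. exact: tt. Qed.
Definition osym_mul := locked_with osym_mul_key
  (fun u v => cls (Tmul (rep u) (rep v))).
Fact osym_scale_key : unit. Proof. exact: tt. Qed.
Definition osym_scale := locked_with osym_scale_key
  (fun a u => cls (Tscale a (rep u))).

Lemma osym_addE x y : osym_add (cls x) (cls y) = cls (Tadd x y).
Proof. by rewrite [osym_add]unlock; apply/eq_cls; apply: oeq_add; apply: rep_cls. Qed.
Lemma osym_mulE x y : osym_mul (cls x) (cls y) = cls (Tmul x y).
Proof. by rewrite [osym_mul]unlock; apply/eq_cls; apply: oeq_mul; apply: rep_cls. Qed.
Lemma osym_scaleE a x : osym_scale a (cls x) = cls (Tscale a x).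
Proof. by rewrite [osym_scale]unlock; apply/eq_cls; apply: oeq_scale; apply: rep_cls. Qed.

Lemma osym_addA : associative osym_add.
Proof.
elim/osym_ind=> x; elim/osym_ind=> y; elim/osym_ind=> z.
by rewrite !osym_addE; apply/eq_cls/oeq_addA.
Qed.
Lemma osym_addC : commutative osym_add.
Proof.
by elim/osym_ind=> x; elim/osym_ind=> y; rewrite !osym_addE; apply/eq_cls/oeq_addC.
Qed.
Lemma osym_add0 : left_id (cls (T0 k)) osym_add.
Proof. by elim/osym_ind=> x; rewrite !osym_addE; apply/eq_cls/oeq_add0. Qed.
Lemma osym_addN : left_inverse (cls (T0 k)) (osym_scale (-1)) osym_add.
Proof.
elim/osym_ind=> x; rewrite !(osym_scaleE, osym_addE); apply/eq_cls.
exact: oeq_trans (oeq_addC _ _) (oeq_addN x).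
Qed.

HB.instance Definition _ :=
  GRing.isZmodule.Build osym osym_addA osym_addC osym_add0 osym_addN.

Lemma clsD x y : cls (Tadd x y) = cls x + cls y. Proof. by rewrite -osym_addE. Qed.

Lemma osym_mulA : associative osym_mul.
Proof.
elim/osym_ind=> x; elim/osym_ind=> y; elim/osym_ind=> z.
by rewrite !osym_mulE; apply/eq_cls/oeq_mulA.
Qed.
Lemma osym_mul1l : left_id (cls (T1 k)) osym_mul.
Proof. by elim/osym_ind=> x; rewrite !osym_mulE; apply/eq_cls/oeq_mul1l. Qed.
Lemma osym_mul1r : right_id (cls (T1 k)) osym_mul.
Proof. by elim/osym_ind=> x; rewrite !osym_mulE; apply/eq_cls/oeq_mul1r. Qed.
Lemma osym_mulDl : left_distributive osym_mul +%R.
Proof.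
by elim/osym_ind=> x; elim/osym_ind=> y; elim/osym_ind=> z;
  rewrite -!clsD !osym_mulE -clsD; apply/eq_cls/oeq_mulDl.
Qed.
Lemma osym_mulDr : right_distributive osym_mul +%R.
Proof.
by elim/osym_ind=> x; elim/osym_ind=> y; elim/osym_ind=> z;
  rewrite -!clsD !osym_mulE -clsD; apply/eq_cls/oeq_mulDr.
Qed.

HB.instance Definition _ := GRing.Zmodule_isPzRing.Build osym
  osym_mulA osym_mul1l osym_mul1r osym_mulDl osym_mulDr.

Lemma osym_scaleA a b u : osym_scale a (osym_scale b u) = osym_scale (a * b) u.
Proof. by elim/osym_ind: u => x; rewrite !osym_scaleE; apply/eq_cls/oeq_sym/oeq_scaleA. Qed.
Lemma osym_scale1 : left_id 1 osym_scale.
Proof. by elim/osym_ind=> x; rewrite !osym_scaleE; apply/eq_cls/oeq_scale1. Qed.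
Lemma osym_scaleDr : right_distributive osym_scale +%R.
Proof.
by move=> a; elim/osym_ind=> x; elim/osym_ind=> y;
  rewrite -!clsD !osym_scaleE -clsD; apply/eq_cls/oeq_scaleDr.
Qed.
Lemma osym_scaleDl u : {morph osym_scale^~ u : a b / a + b}.
Proof.
by elim/osym_ind: u => x a b; rewrite /= !osym_scaleE -clsD; apply/eq_cls/oeq_scaleDl.
Qed.

HB.instance Definition _ := GRing.Zmodule_isLmodule.Build k osym
  osym_scaleA osym_scale1 osym_scaleDr osym_scaleDl.

Lemma cls0 : cls (T0 k) = 0. Proof. by []. Qed.
Lemma cls1 : cls (T1 k) = 1. Proof. by []. Qed.
Lemma clsM x y : cls (Tmul x y) = cls x * cls y. Proof. by rewrite -osym_mulE. Qed.
Lemma clsZ a x : cls (Tscale a x) = a *: cls x. Proof. by rewrite -osym_scaleE. Qed.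

Lemma scaler_signr n (u : osym) : ((-1) ^+ n : k) *: u = (-1) ^+ n * u.
Proof.
rewrite -signr_odd -[in RHS]signr_odd scaler_sign.
by case: odd; rewrite ?expr0 ?mul1r // expr1 mulN1r.
Qed.

Lemma cls_sgn n x : cls (Tscale (sgn k n) x) = (-1) ^+ n * cls x.
Proof. by rewrite clsZ scaler_signr. Qed.

End Quotient.

Section Generators.
Variable k : fieldType.
Local Notation term := (term k).
Local Notation hh := (hh k).
Local Notation ee := (ee k).

Definition hQ r : osym k := cls (hh r).
Definition eQ r : osym k := cls (ee r).

Lemma size_es r : size (es k r) = r.+1.
Proof. by elim: r => //= r IHr; rewrite size_rcons IHr. Qed.

Lemma nth_es r i : (i <= r)%N -> nth (T0 k) (es k r) i = ee i.
Proof.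
elim: r => [|r IHr]; first by rewrite leqn0 => /eqP ->.
rewrite leq_eqVlt => /predU1P[-> //|]; rewrite ltnS => le_ir.
by rewrite /= nth_rcons size_es ltnS le_ir IHr.
Qed.

Lemma ee_succ r : ee r.+1 = Tscale (sgn k r)
  (tsum [seq Tscale (sgn k i) (Tmul (ee i) (hh (r.+1 - i))) | i <- iota 0 r.+1]).
Proof.
rewrite {1}/ee -[es k r.+1]/(rcons _ _) nth_rcons size_es ltnn eqxx.
congr (Tscale _ (tsum _)).
apply/eq_in_map => i; rewrite mem_iota ltnS => /andP[_ le_ir].
by rewrite nth_es.
Qed.

Lemma cls_tsum (s : seq term) : cls (tsum s) = \sum_(t <- s) cls t.
Proof. by elim: s => [|t s IHs]; rewrite ?big_nil // big_cons clsD IHs. Qed.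

Lemma sum_eQ_hQ r :
  \sum_(s < r.+1) (-1) ^+ s * (eQ s * hQ (r - s)) = (r == 0)%:R.
Proof.
case: r => [|r]; first by rewrite big_ord1 expr0 mul1r; exact: mulr1.
rewrite big_ord_recr /= subnn mulr1 {2}/eQ ee_succ cls_sgn cls_tsum big_map.
rewrite -(subn0 r.+1) -/(index_iota 0 r.+1) big_mkord subn0 mulrA -exprD.
rewrite -signr_odd addSn /= oddD addbb mulN1r addrC -sumrN.
rewrite -big_split big1 //= => i _.
by rewrite cls_sgn clsM addNr.
Qed.

Lemma par_hh r : par (hh r) (odd r).
Proof. by case: r => [|r]; [apply: par1 | apply: parG]. Qed.

Lemma par_tsum (I : eqType) (f : I -> term) (s : seq I) b :
  (forall i, i \in s -> par (f i) b) -> par (tsum (map f s)) b.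
Proof.
elim: s => [|i s IHs] par_s /=; first exact: par0.
apply: parD; first by apply: par_s; rewrite inE eqxx.
by apply: IHs => j js; apply: par_s; rewrite inE js orbT.
Qed.

Lemma par_ee r : par (ee r) (odd r).
Proof.
elim/ltn_ind: r => -[|r] IHr; first exact: par1.
rewrite ee_succ; apply/parZ/par_tsum => i; rewrite mem_iota ltnS => /andP[_ le_ir].
have -> : odd r.+1 = odd i (+) odd (r.+1 - i) by rewrite oddB ?(leqW le_ir) // addbC addbK.
by apply/parZ/parM; [apply: IHr; rewrite ltnS | apply: par_hh].
Qed.

End Generators.

Section Morphisms.
Variable k : fieldType.
Local Notation osym := (osym k).
Implicit Types (F S A : osym -> osym) (u v : osym).

Definition qpar u b := exists2 x, u = cls x & par x b.

Lemma qpar_cls x b : par x b -> qpar (cls x) b.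
Proof. by exists x. Qed.

Lemma qpar_decomposition u :
  exists u0 u1, [/\ qpar u0 false, qpar u1 true & u = u0 + u1].
Proof.
elim/osym_ind: u; elim=> [||n|x IHx y IHy|x IHx y IHy|a x IHx].
- by exists 0, 0; split; rewrite ?addr0 //; apply/qpar_cls/par0.
- by exists 1, 0; split; rewrite ?addr0 //; apply/qpar_cls; [apply: par1|apply: par0].
- have := parG k n; case: odd => parGn.
    by exists 0, (cls (G k n)); split; rewrite ?add0r //; apply/qpar_cls; [apply: par0|].
  by exists (cls (G k n)), 0; split; rewrite ?addr0 //; apply/qpar_cls; [|apply: par0].
- rewrite clsD; have [_ [_ [[x0 -> px0] [x1 -> px1] ->]]] := IHx.
  have [_ [_ [[y0 -> py0] [y1 -> py1] ->]]] := IHy.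
  exists (cls (Tadd x0 y0)), (cls (Tadd x1 y1)).
  by split; [apply/qpar_cls/parD..| rewrite !clsD addrACA].
- rewrite clsM; have [_ [_ [[x0 -> px0] [x1 -> px1] ->]]] := IHx.
  have [_ [_ [[y0 -> py0] [y1 -> py1] ->]]] := IHy.
  exists (cls (Tadd (Tmul x0 y0) (Tmul x1 y1))),
         (cls (Tadd (Tmul x0 y1) (Tmul x1 y0))).
  split; first by apply/qpar_cls/parD; [apply: (parM px0 py0)|apply: (parM px1 py1)].
    by apply/qpar_cls/parD; [apply: (parM px0 py1)|apply: (parM px1 py0)].
  by rewrite !clsD !clsM mulrDl !mulrDr [RHS]addrACA [cls x1 * cls y1 + _]addrC.
- rewrite clsZ; have [_ [_ [[x0 -> px0] [x1 -> px1] ->]]] := IHx.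
  exists (cls (Tscale a x0)), (cls (Tscale a x1)).
  by split; [apply/qpar_cls/parZ..| rewrite !clsZ scalerDr].
Qed.

Lemma qpar_sign n u b : qpar u b -> qpar ((-1) ^+ n * u) b.
Proof. by move=> [x -> px]; rewrite -cls_sgn; apply/qpar_cls/parZ. Qed.

Record lin_morph F : Prop := LinMorph {
  lin_morphD : {morph F : u v / u + v};
  lin_morphZ : forall a u, F (a *: u) = a *: F u }.

Record alg_morph F : Prop := AlgMorph {
  alg_morph_lin :> lin_morph F;
  alg_morph1 : F 1 = 1;
  alg_morphM : {morph F : u v / u * v} }.

Record super_antimorph F : Prop := SuperAntimorph {
  super_antimorph_lin :> lin_morph F;
  super_antimorph1 : F 1 = 1;
  super_antimorphM : forall u v b c, qpar u b -> qpar v c ->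
    F (u * v) = (-1) ^+ (b && c) * (F v * F u) }.

Definition parity_preserving F := forall u b, qpar u b -> qpar (F u) b.

Section LinMorph.
Variable F : osym -> osym.
Hypothesis linF : lin_morph F.

Lemma lin_morph0 : F 0 = 0.
Proof. by rewrite -{1}(scale0r (R := k) 0) (lin_morphZ linF) scale0r. Qed.

Lemma lin_morph_sum (I : Type) (r : seq I) (P : pred I) (G : I -> osym) :
  F (\sum_(i <- r | P i) G i) = \sum_(i <- r | P i) F (G i).
Proof. exact: (big_morph _ (lin_morphD linF) lin_morph0). Qed.

Lemma lin_morph_sign n u : F ((-1) ^+ n * u) = (-1) ^+ n * F u.
Proof. by rewrite -!scaler_signr (lin_morphZ linF). Qed.

Lemma lin_morph_natr n : F 1 = 1 -> F n%:R = n%:R.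
Proof.
by move=> F1; elim: n => [|n IHn]; rewrite ?lin_morph0 // !mulrS (lin_morphD linF) F1 IHn.
Qed.

End LinMorph.

Lemma lin_morph_comp F1 F2 : lin_morph F1 -> lin_morph F2 -> lin_morph (F1 \o F2).
Proof. by move=> [D1 Z1] [D2 Z2]; split=> [u v|a u] /=; rewrite ?D2 ?D1 ?Z2 ?Z1. Qed.

Lemma alg_morph_comp A1 A2 : alg_morph A1 -> alg_morph A2 -> alg_morph (A1 \o A2).
Proof.
move=> [lin1 one1 M1] [lin2 one2 M2].
by split=> [|/=|u v /=]; rewrite ?one2 ?one1 ?M2 ?M1 //; apply: lin_morph_comp.
Qed.

Lemma parity_preserving_comp F1 F2 :
  parity_preserving F1 -> parity_preserving F2 -> parity_preserving (F1 \o F2).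
Proof. by move=> par1 par2 u b /par2 /par1. Qed.

Lemma super_antimorph_compr S A : super_antimorph S -> alg_morph A ->
  parity_preserving A -> super_antimorph (S \o A).
Proof.
move=> [linS S1 SM] [linA A1 AM] parA.
split=> [|/=|u v b c ub vc /=]; first exact: lin_morph_comp; first by rewrite A1.
by rewrite AM (SM _ _ b c) //; apply: parA.
Qed.

Lemma super_antimorph_compl A S : alg_morph A -> super_antimorph S ->
  super_antimorph (A \o S).
Proof.
move=> [linA A1 AM] [linS S1 SM].
split=> [|/=|u v b c ub vc /=]; first exact: lin_morph_comp; first by rewrite S1.
by rewrite (SM _ _ b c) // lin_morph_sign // AM.
Qed.

Lemma alg_morph_parity_preserving A : alg_morph A ->
  (forall n, qpar (A (hQ k n.+1)) (odd n.+1)) -> parity_preserving A.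
Proof.
move=> [linA A1 AM] parAh _ b [x -> px]; elim: x b / px.
- by move=> b; rewrite cls0 lin_morph0 //; apply/qpar_cls/par0.
- by rewrite cls1 A1; apply/qpar_cls/par1.
- exact: parAh.
- move=> x y b _ + _ +; rewrite clsD (lin_morphD linA) => -[x' -> px'] [y' -> py'].
  by rewrite -clsD; apply/qpar_cls/parD.
- move=> a x b _ +; rewrite clsZ (lin_morphZ linA) => -[x' -> px'].
  by rewrite -clsZ; apply/qpar_cls/parZ.
- move=> x y b c _ + _ +; rewrite clsM AM => -[x' -> px'] [y' -> py'].
  by rewrite -clsM; apply/qpar_cls/parM.
- by move=> x y b _ IHx /eq_cls <-.
Qed.

Lemma super_antimorph_eq S1 S2 : super_antimorph S1 -> super_antimorph S2 ->
  (forall n, S1 (hQ k n.+1) = S2 (hQ k n.+1)) -> S1 =1 S2.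
Proof.
move=> [lin1 one1 M1] [lin2 one2 M2] S12.
have S12_hom x b : par x b -> S1 (cls x) = S2 (cls x).
  elim=> {x b} [b||n|x y b _ IHx _ IHy|a x b _ IHx|x y b c px IHx py IHy|
                x y b _ IHx /eq_cls <- //].
  - by rewrite cls0 !lin_morph0.
  - by rewrite cls1 one1 one2.
  - exact: S12.
  - by rewrite clsD (lin_morphD lin1) (lin_morphD lin2) IHx IHy.
  - by rewrite clsZ (lin_morphZ lin1) (lin_morphZ lin2) IHx.
  - by rewrite clsM (M1 _ _ b c) ?(M2 _ _ b c) ?IHx ?IHy //; apply: qpar_cls.
move=> u; have [_ [_ [[x0 -> px0] [x1 -> px1] ->]]] := qpar_decomposition u.
by rewrite (lin_morphD lin1) (lin_morphD lin2) (S12_hom _ _ px0) (S12_hom _ _ px1).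
Qed.

Definition lift (f : term k -> term k) u : osym := cls (f (rep u)).

Lemma liftE f x : respects f -> lift f (cls x) = cls (f x).
Proof. by move=> respf; apply/eq_cls/respf/rep_cls. Qed.

Lemma lift_lin_morph f : linear_map f -> lin_morph (lift f).
Proof.
move=> [respf [fD fZ]]; split=> [u v|a u].
  elim/osym_ind: u => x; elim/osym_ind: v => y.
  by rewrite -clsD !liftE // -clsD; apply/eq_cls/fD.
by elim/osym_ind: u => x; rewrite -clsZ !liftE // -clsZ; apply/eq_cls/fZ.
Qed.

Lemma lift_alg_morph f : alg_map f -> alg_morph (lift f).
Proof.
move=> [linf [f1 fM]]; have respf := linf.1.
split; first exact: lift_lin_morph.
  by rewrite -cls1 liftE //; apply/eq_cls.
move=> u v; elim/osym_ind: u => x; elim/osym_ind: v => y.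
by rewrite -clsM !liftE // -clsM; apply/eq_cls/fM.
Qed.

Section SuperAntiInvolution.
Variable f : term k -> term k.
Hypothesis antif : super_anti_involution f.

Let respf : respects f := antif.1.1.

Lemma lift_parity_preserving : parity_preserving (lift f).
Proof. by move=> _ b [x -> px]; rewrite liftE //; apply/qpar_cls/antif.2.1. Qed.

Lemma lift_involutive : involutive (lift f).
Proof. by elim/osym_ind=> x; rewrite !liftE //; apply/eq_cls/antif.2.2.1. Qed.

Lemma lift_anti_mul u v b c : qpar u b -> qpar v c ->
  lift f (u * v) = (-1) ^+ (b && c) * (lift f v * lift f u).
Proof.
move=> [x -> px] [y -> py].
by rewrite -clsM !liftE // -clsM -cls_sgn; apply/eq_cls/antif.2.2.2.
Qed.

Lemma lift_super_antimorph : super_antimorph (lift f).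
Proof.
split; [exact: lift_lin_morph antif.1 | | exact: lift_anti_mul].
have par1 : qpar 1 false by apply/qpar_cls/par1.
have := lift_anti_mul (lift_parity_preserving par1) par1.
by rewrite !mulr1 lift_involutive mul1r mulr1 => /esym.
Qed.

End SuperAntiInvolution.

End Morphisms.

Lemma mulr_signCA (R : pzRingType) n (x y : R) :
  x * ((-1) ^+ n * y) = (-1) ^+ n * (x * y).
Proof. by rewrite mulrA (commr_sign x n) mulrA. Qed.

Lemma bin2D m n : 'C(m + n, 2) = ('C(m, 2) + 'C(n, 2) + m * n)%N.
Proof.
elim: n => [|n IHn]; first by rewrite addn0 bin0n muln0 !addn0.
by rewrite addnS !binS IHn !bin1 mulnS; lia.
Qed.

Section Theorem7.
Variable k : fieldType.
Local Notation hQ := (hQ k).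
Local Notation eQ := (eQ k).
Variables A S : osym k -> osym k.
Hypothesis algA : alg_morph A.
Hypothesis A_eQ : forall r, A (eQ r) = (-1) ^+ 'C(r, 2) * eQ r.
Hypothesis antiS : super_antimorph S.
Hypothesis S_eQ : forall r, S (eQ r) = eQ r.

Lemma alg_morph_hQ r : A (hQ r) = (-1) ^+ 'C(r, 2) * S (hQ r).
Proof.
have [linA linS] := (alg_morph_lin algA, super_antimorph_lin antiS).
pose a s := (-1) ^+ (s + 'C(s, 2)) * eQ s.
have conv_aA n : conv a (A \o hQ) n = (n == 0)%:R.
  rewrite -(lin_morph_natr linA) ?(alg_morph1 algA) //.
  rewrite -(sum_eQ_hQ k n) (lin_morph_sum linA).
  apply: eq_bigr => i _; rewrite (lin_morph_sign linA) (alg_morphM algA) A_eQ.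
  by rewrite /a exprD -!mulrA.
have conv_Sa n : conv (fun r => (-1) ^+ 'C(r, 2) * S (hQ r)) a n = (n == 0)%:R.
  have -> : (n == 0)%:R = (-1) ^+ 'C(n, 2) * S (n == 0)%:R.
    rewrite (lin_morph_natr linS) ?(super_antimorph1 antiS) //.
    by case: n => [|n] /=; rewrite ?mulr0 ?expr0 ?mul1r.
  rewrite -(sum_eQ_hQ k n) (lin_morph_sum linS) mulr_sumr -conv_rev.
  apply: eq_bigr => i _; have le_in : (i <= n)%N by rewrite -ltnS.
  rewrite (lin_morph_sign linS).
  rewrite (super_antimorphM antiS (b := odd i) (c := odd (n - i))); last 2 first.
  - exact/qpar_cls/par_ee.
  - exact/qpar_cls/par_hh.
  rewrite S_eQ /a mulr_signCA !mulrA -!exprD -!mulrA.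
  congr (_ * _); rewrite -signr_odd -[in RHS]signr_odd; congr (_ ^+ _).
  rewrite -[in 'C(n, 2)](subnKC le_in) bin2D !oddD oddM.
  by case: (odd i); case: (odd 'C(i, 2)); case: (odd 'C(n - i, 2)); case: (odd (n - i)).
exact: conv_inv_unique conv_aA conv_Sa r.
Qed.

Variable P : osym k -> osym k.
Hypothesis algP : alg_morph P.
Hypothesis P_hQ : forall r, P (hQ r) = (-1) ^+ r * eQ r.
Hypothesis parS : parity_preserving S.
Hypothesis invS : involutive S.

Lemma super_antimorph_alg_morph_comm : S \o A \o P =1 P \o (S \o A).
Proof.
have [linA linS] := (alg_morph_lin algA, super_antimorph_lin antiS).
have parA : parity_preserving A.
  apply: alg_morph_parity_preserving algA _ => n.
  by rewrite alg_morph_hQ; apply/qpar_sign/parS/qpar_cls/par_hh.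
have parP : parity_preserving P.
  apply: alg_morph_parity_preserving algP _ => n.
  by rewrite P_hQ; apply/qpar_sign/qpar_cls/par_ee.
apply: super_antimorph_eq => [||n /=].
- exact: super_antimorph_compr antiS (alg_morph_comp algA algP)
    (parity_preserving_comp parA parP).
- exact/(super_antimorph_compl algP)/super_antimorph_compr.
rewrite P_hQ (lin_morph_sign linA) A_eQ !(lin_morph_sign linS) S_eQ alg_morph_hQ.
by rewrite (lin_morph_sign linS) invS (lin_morph_sign algP) P_hQ !mulrA -!exprD addnC.
Qed.

End Theorem7.

Theorem mainTheorem7 (k : fieldType) (char2 : (2%:R : k) != 0)
  (psi gam star : term k -> term k) :
  alg_automorphism psi ->
  (forall r, oeq (psi (hh k r)) (Tscale (sgn k r) (ee k r))) ->
  alg_involution gam ->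
  (forall r, oeq (gam (ee k r)) (Tscale (sgn k 'C(r, 2)) (ee k r))) ->
  super_anti_involution star ->
  (forall r, oeq (star (ee k r)) (ee k r)) ->
  (forall r,
     oeq (gam (hh k r)) (Tscale (sgn k 'C(r, 2)) (star (hh k r))) /\
     oeq (gam (ee k r)) (Tscale (sgn k 'C(r, 2)) (star (ee k r)))) /\
  (forall x, oeq (star (gam (psi x))) (psi (star (gam x)))).
Proof.
move=> [algpsi _] psi_hh [alggam _] gam_ee antistar star_ee.
have [[respsi resgam] resstar] := (algpsi.1.1, alggam.1.1, antistar.1.1).
have P_hQ r : lift psi (hQ k r) = (-1) ^+ r * eQ k r.
  by rewrite liftE // -cls_sgn; apply/eq_cls.
have A_eQ r : lift gam (eQ k r) = (-1) ^+ 'C(r, 2) * eQ k r.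
  by rewrite liftE // -cls_sgn; apply/eq_cls.
have S_eQ r : lift star (eQ k r) = eQ k r by rewrite liftE //; apply/eq_cls.
have [[algP algA] antiS] := (lift_alg_morph algpsi, lift_alg_morph alggam,
  lift_super_antimorph antistar).
split=> [r|x]; first split.
- apply/eq_cls; rewrite cls_sgn -!liftE //.
  exact: alg_morph_hQ algA A_eQ antiS S_eQ r.
- exact: oeq_trans (gam_ee r) (oeq_scale _ (oeq_sym (star_ee r))).
apply/eq_cls; rewrite -[LHS](liftE _ resstar) -(liftE _ resgam) -(liftE _ respsi).
rewrite -[RHS](liftE _ respsi) -(liftE _ resstar) -(liftE _ resgam).
exact: (super_antimorph_alg_morph_comm algA A_eQ antiS S_eQ algP P_hQ
  (lift_parity_preserving antistar) (lift_involutive antistar)).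
Qed.
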